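(* Let $r \geq 0$ and $k \geq 2$ be integers. Then the treewidth of the primal graph of the CNF $F_{r,k}$ is at most $2k-1$.
   Context: For a graph $G$, the CNF $CNF(G)$ has a variable $X_u$ for each vertex $u \in V(G)$ and a variable $X_{u,v}=X_{v,u}$ for each edge $\{u,v\} \in E(G)$; its clauses are $(X_u \vee X_{u,v} \vee X_v)$, one for each edge $\{u,v\} \in E(G)$. Let $T_r$ be the complete binary tree of height $r$ (it has $2^{r+1}-1$ nodes). $CT_{r,k}$ is the graph obtained from $T_r$ by replacing each node by a clique on $k$ vertices and, for every edge $\{a,b\}$ of $T_r$, making every vertex of the clique of $a$ adjacent to every vertex of the clique of $b$. $F_{r,k}=CNF(CT_{r,k})$. The primal graph of a CNF has the variables as vertices, two being adjacent iff they occur together in some clause. *)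

From mathcomp Require Import all_boot.
Set Implicit Arguments.
Unset Strict Implicit.
Unset Printing Implicit Defensive.

(* A (simple) graph on a finite vertex type V is given by a relation
   e : rel V, assumed symmetric and irreflexive where relevant. *)

(* A tree: nonempty, connected, and without cycles (a cycle being a closed
   walk through >= 3 pairwise distinct nodes). *)
Definition is_tree (T : finType) (te : rel T) : Prop :=
  [/\ symmetric te, irreflexive te, 0 < #|T|,
      (forall x y : T, connect te x y) &
      (forall (x : T) (p : seq T),
          path te x p -> uniq (x :: p) -> 2 <= size p -> ~~ te (last x p) x)].

Definition tree_decomposition (V : finType) (e : rel V)
    (T : finType) (te : rel T) (B : T -> {set V}) : Prop :=
  [/\ is_tree te,
      (forall v : V, exists t : T, v \in B t),
      (forall u v : V, e u v -> exists t : T, (u \in B t) && (v \in B t)) &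
      (forall (v : V) (t1 t2 : T), v \in B t1 -> v \in B t2 ->
          connect (fun a b => [&& te a b, v \in B a & v \in B b]) t1 t2)].

(* Width of a decomposition is max bag size minus one; so
   "treewidth (V,e) <= w" means: some tree decomposition has all bags of
   size at most w + 1. *)
Definition treewidth_le (V : finType) (e : rel V) (w : nat) : Prop :=
  exists (T : finType) (te : rel T) (B : T -> {set V}),
    tree_decomposition e te B /\ forall t : T, #|B t| <= w.+1.

(* A CNF over a finite variable type X is a set of clauses; a clause is a
   set of literals (variable, polarity). *)
Definition cnf (X : finType) := {set {set (X * bool)}}.

Definition occurs_in (X : finType) (x : X) (C : {set (X * bool)}) : bool :=
  [exists b : bool, (x, b) \in C].

Definition primal (X : finType) (F : cnf X) : rel X :=
  fun x y => (x != y) && [exists C in F, occurs_in x C && occurs_in y C].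

(* Edge variables X_{u,v} = X_{v,u}: one per (unordered) edge {u,v}. *)
Definition is_edge_set (V : finType) (e : rel V) (s : {set V}) : bool :=
  [exists u, exists v, e u v && (s == [set u; v])].

Definition evar (V : finType) (e : rel V) := {s : {set V} | is_edge_set e s}.

(* Variables of CNF(G): X_u (inl u) and X_{u,v} (inr {u,v}). *)
Definition gvar (V : finType) (e : rel V) : finType := (V + evar e)%type.

(* The clause (X_u \/ X_{u,v} \/ X_v), all literals positive. *)
Definition edge_clause (V : finType) (e : rel V) (u v : V)
    : {set (gvar e * bool)} :=
  [set l : gvar e * bool | l.2 &&
     match l.1 with
     | inl w => (w == u) || (w == v)
     | inr s => val s == [set u; v]
     end].

Definition CNF (V : finType) (e : rel V) : cnf (gvar e) :=
  [set edge_clause e p.1 p.2 | p in [set p : V * V | e p.1 p.2]].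

(* Nodes of T_r (height r, 2^(r+1)-1 nodes), in heap order: node i has
   children 2i+1 and 2i+2; the parent of a node a > 0 is (a-1)/2. *)
Definition Tnode (r : nat) := 'I_(2 ^ r.+1 - 1).

Definition Tadj (r : nat) : rel (Tnode r) :=
  fun a b => ((0 < a) && ((a.-1)./2 == b)) || ((0 < b) && ((b.-1)./2 == a)).

(* Vertices of CT_{r,k}: (tree node, index in its k-clique). *)
Arguments Tadj : clear implicits.

Definition CTV (r k : nat) : finType := (Tnode r * 'I_k)%type.

Definition CTadj (r k : nat) : rel (CTV r k) :=
  fun x y => ((x.1 == y.1) && (x.2 != y.2)) || Tadj r x.1 y.1.

Arguments CTadj : clear implicits.

Definition F_rk (r k : nat) : cnf (gvar (CTadj r k)) := CNF (CTadj r k).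

(** Root the tree decomposition at the complete binary tree:
    node [a] of [T_r] gets the bag of all vertex variables [X_u] with [u] in
    the cliques of [a] and of its parent ([2k] variables).  Every edge
    [{u,v}] of [CT_{r,k}] joins vertices of one node or of a node and its
    parent, so a leaf hanging below the deeper of the two nodes, with bag
    [{X_u, X_v, X_{u,v}}], covers its clause.  Both kinds of decompositions
    arise from a parent map that strictly decreases a rank, which makes the
    tree axioms and the running intersection property easy. *)

From mathcomp Require Import all_boot.
From mathcomp Require Import zify.

Set Implicit Arguments.
Unset Strict Implicit.
Unset Printing Implicit Defensive.

Section ParentTree.
Variables (T : finType) (par : T -> T) (root : T) (rank : T -> nat).
Hypothesis rank_par : forall x, x != root -> rank (par x) < rank x.

Definition parent_rel : rel T :=
  fun x y => ((x != root) && (par x == y)) || ((y != root) && (par y == x)).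

Lemma parent_rel_sym : symmetric parent_rel.
Proof. by move=> x y; rewrite /parent_rel orbC. Qed.

Lemma parent_rel_irr : irreflexive parent_rel.
Proof.
move=> x; rewrite /parent_rel orbb; apply/negP => /andP[/rank_par + /eqP px].
by rewrite px ltnn.
Qed.

Lemma connect_parent_root x : connect parent_rel x root.
Proof.
have [n] := ubnP (rank x); elim: n x => // n IHn x rank_x.
have [-> | x_root] := eqVneq x root; first exact: connect0.
apply: connect_trans (IHn (par x) _); last by have := rank_par x_root; lia.
by apply: connect1; rewrite /parent_rel x_root eqxx.
Qed.

Lemma parent_rel_rank_le y z :
  parent_rel y z -> rank z <= rank y -> z = par y.
Proof.
case/orP=> [/andP[_ /eqP //] | /andP[z_root /eqP pz]].
by have := rank_par z_root; rewrite pz; lia.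
Qed.

(* Both cycle neighbours of a rank-maximal vertex would have to be its parent. *)
Lemma cycle_rank_max_short y q : cycle parent_rel (y :: q) -> uniq (y :: q) ->
  (forall z, z \in q -> rank z <= rank y) -> size q < 2.
Proof.
case: q => [|q0 [|q1 q]] //= cyc uniq_yq rank_max.
move: cyc; rewrite rcons_path /= => /and4P[y_q0 _ _ qlast_y].
have q0_par : q0 = par y.
  by apply: parent_rel_rank_le y_q0 (rank_max _ _); rewrite inE eqxx.
have last_par : last q1 q = par y.
  apply: parent_rel_rank_le; first by rewrite parent_rel_sym.
  by apply: rank_max; rewrite inE mem_last orbT.
by case/and4P: uniq_yq => _ /negP[]; rewrite q0_par -last_par mem_last.
Qed.

Lemma is_tree_parent_rel : is_tree parent_rel.
Proof.
split; [exact: parent_rel_sym | exact: parent_rel_irr | by apply/card_gt0P; exists root | | ].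
  move=> x y; apply: connect_trans (connect_parent_root x) _.
  by rewrite (sym_connect_sym parent_rel_sym); exact: connect_parent_root.
move=> x p x_p uniq_xp size_p; apply/negP => closing.
have cyc : cycle parent_rel (x :: p) by rewrite /= rcons_path x_p closing.
case: (@arg_maxnP _ x (mem (x :: p)) rank (mem_head x p)) => y y_xp rank_max.
case/rot_to: y_xp => i q rot_xp.
have size_q : size q = size p by have := congr1 size rot_xp; rewrite size_rot => -[].
suff : size q < 2 by rewrite size_q ltnNge size_p.
apply: (@cycle_rank_max_short y); rewrite -?rot_xp ?rot_cycle ?rot_uniq //.
move=> z zq; have z_xp : z \in x :: p by rewrite -(mem_rot i) rot_xp inE zq orbT.
exact: rank_max.
Qed.

Variables (V : finType) (B : T -> {set V}) (top : V -> T).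
Hypothesis bag_par :
  forall v t, v \in B t -> t != top v -> (t != root) && (v \in B (par t)).

Let bag_rel v := fun a b => [&& parent_rel a b, v \in B a & v \in B b].

Lemma connect_bag_top v t : v \in B t -> connect (bag_rel v) t (top v).
Proof.
have [n] := ubnP (rank t); elim: n t => // n IHn t rank_t v_t.
have [-> | t_top] := eqVneq t (top v); first exact: connect0.
have /andP[t_root v_pt] := bag_par v_t t_top.
apply: connect_trans (IHn (par t) _ v_pt); last by have := rank_par t_root; lia.
by apply: connect1; rewrite /bag_rel /parent_rel t_root eqxx v_t v_pt.
Qed.

Lemma parent_tree_decomposition (e : rel V) :
  (forall v, v \in B (top v)) ->
  (forall u v, e u v -> exists t, (u \in B t) && (v \in B t)) ->
  tree_decomposition e parent_rel B.
Proof.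
move=> bag_top cover_edges; split=> [|v|//|v t1 t2 v_t1 v_t2].
- exact: is_tree_parent_rel.
- by exists (top v).
have bag_rel_sym : symmetric (bag_rel v).
  by move=> a b; rewrite /bag_rel parent_rel_sym; case: (v \in B a); case: (v \in B b).
apply: connect_trans (connect_bag_top v_t1) _.
by rewrite (sym_connect_sym bag_rel_sym); exact: connect_bag_top.
Qed.
End ParentTree.

Section EdgeClauses.
Variables (V : finType) (e : rel V).

Lemma occurs_in_edge_clause u v w :
  occurs_in w (edge_clause e u v) =
  match w with inl x => (x == u) || (x == v) | inr s => val s == [set u; v] end.
Proof.
apply/existsP/idP => [[b] | occ]; first by rewrite inE => /andP[_].
by exists true; rewrite inE.
Qed.

Lemma primal_CNF_edge x y : primal (CNF e) x y ->
  exists2 p : V * V, e p.1 p.2 &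
    occurs_in x (edge_clause e p.1 p.2) && occurs_in y (edge_clause e p.1 p.2).
Proof.
case/andP=> _ /existsP[C /andP[/imsetP[p p_e ->] occ]].
by exists p; first by rewrite inE in p_e.
Qed.

Lemma edge_set_edge u v : e u v -> is_edge_set e [set u; v].
Proof. by move=> uv; apply/existsP; exists u; apply/existsP; exists v; rewrite uv eqxx. Qed.

Definition edge_evar u v (uv : e u v) : evar e := exist (is_edge_set e) _ (edge_set_edge uv).

Definition edge_bag (s : evar e) : {set gvar e} := inr s |: [set inl x | x in val s].

Lemma card_edge_bag s : #|edge_bag s| <= 3.
Proof.
rewrite cardsU1; apply: leq_add (leq_b1 _) (leq_trans (leq_imset_card _ _) _).
case/existsP: (valP s) => u /existsP[v /andP[_ /eqP ->]].
by rewrite cards2; case: (_ != _).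
Qed.

Lemma edge_clause_sub_edge_bag u v (uv : e u v) w :
  occurs_in w (edge_clause e u v) -> w \in edge_bag (edge_evar uv).
Proof.
rewrite occurs_in_edge_clause /edge_bag; case: w => [x | s] occ.
  by rewrite setU1r //; apply/imsetP; exists x; rewrite ?inE.
by apply/setU1P; left; congr inr; apply: val_inj; apply/eqP.
Qed.

End EdgeClauses.

Section BinaryTree.
Variable r : nat.

Lemma Tnode_gt0 : 0 < 2 ^ r.+1 - 1.
Proof. by rewrite expnS; have := expn_gt0 2 r; lia. Qed.

Definition Troot : Tnode r := Ordinal Tnode_gt0.

Lemma Tparent_subproof (a : Tnode r) : (a.-1)./2 < 2 ^ r.+1 - 1.
Proof. by have := ltn_ord a; lia. Qed.

Definition Tparent (a : Tnode r) : Tnode r := Ordinal (Tparent_subproof a).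

Lemma Tparent_root : Tparent Troot = Troot.
Proof. exact: val_inj. Qed.

Lemma Tparent_lt a : a != Troot -> Tparent a < a.
Proof.
move=> a_root; have : val a != 0 by apply: contra a_root => /eqP a0; apply/eqP/val_inj.
by rewrite /=; lia.
Qed.

Definition Tdeeper (a b : Tnode r) : Tnode r := if a < b then b else a.

Lemma Tdeeper_sym a b : Tdeeper a b = Tdeeper b a.
Proof. by apply: val_inj; rewrite /Tdeeper; do 2 case: ifP => /=; lia. Qed.

Lemma Tadj_sym : symmetric (Tadj r).
Proof. by move=> a b; rewrite /Tadj orbC. Qed.

Lemma Tdeeper_adj a b : (a == b) || Tadj r a b ->
  (a == Tdeeper a b) || (a == Tparent (Tdeeper a b)).
Proof. by rewrite /Tadj /Tdeeper -!val_eqE /=; case: ifP => /=; lia. Qed.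

End BinaryTree.

Section CliqueTreeDecomposition.
Variables r k : nat.
Local Notation V := (CTV r k).
Local Notation e := (CTadj r k).

Lemma CTadj_nodes x y : e x y -> (x.1 == y.1) || Tadj r x.1 y.1.
Proof. by case/orP=> [/andP[-> _] | ->]; rewrite ?orbT. Qed.

(* The deeper of the two tree nodes carrying the endpoints of [s]; the [Troot]
   branch is unreachable since [s] is an edge. *)
Definition edge_node (s : evar e) : Tnode r :=
  if [pick p : V * V | e p.1 p.2 && (val s == [set p.1; p.2])] is Some p
  then Tdeeper p.1.1 p.2.1 else Troot r.

Lemma edge_node_adj (s : evar e) x : x \in val s ->
  (x.1 == edge_node s) || (x.1 == Tparent (edge_node s)).
Proof.
rewrite /edge_node; case: pickP => [[u v] /andP[/CTadj_nodes uv /eqP ->] | no_pick].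
  rewrite !inE => /orP[] /eqP -> /=; first exact: Tdeeper_adj.
  by rewrite Tdeeper_sym; apply: Tdeeper_adj; rewrite eq_sym Tadj_sym.
case/existsP: (valP s) => u /existsP[v uv].
by have := no_pick (u, v); rewrite /= uv.
Qed.

Definition node_bag (a : Tnode r) : {set gvar e} :=
  [set inl x | x in setX [set a; Tparent a] [set: 'I_k]].

Lemma card_node_bag a : #|node_bag a| <= 2 * k.
Proof.
apply: leq_trans (leq_imset_card _ _) _.
by rewrite cardsX cards2 cardsT card_ord; case: (_ != _) => /=; lia.
Qed.

Lemma mem_node_bag a x : (inl x \in node_bag a) = (x.1 == a) || (x.1 == Tparent a).
Proof. by rewrite mem_imset ?inE ?andbT //; move=> ? ? []. Qed.

Definition dnode : finType := (Tnode r + evar e)%type.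

Definition dparent (t : dnode) : dnode :=
  match t with inl a => inl (Tparent a) | inr s => inl (edge_node s) end.

Definition droot : dnode := inl (Troot r).

(* Edge leaves lie below every node of the binary tree. *)
Definition drank (t : dnode) : nat :=
  match t with inl a => val a | inr _ => 2 ^ r.+1 end.

Definition dbag (t : dnode) : {set gvar e} :=
  match t with inl a => node_bag a | inr s => edge_bag s end.

Definition dtop (w : gvar e) : dnode :=
  match w with inl x => inl x.1 | inr s => inr s end.

Lemma drank_parent t : t != droot -> drank (dparent t) < drank t.
Proof.
case: t => [a | s] /= t_root; last by have := ltn_ord (edge_node s); lia.
by apply: Tparent_lt; apply: contra t_root => /eqP ->.
Qed.

Lemma dbag_top w : w \in dbag (dtop w).
Proof. by case: w => [x | s] /=; rewrite ?mem_node_bag ?eqxx ?setU11. Qed.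

Lemma dbag_parent w t : w \in dbag t -> t != dtop w ->
  (t != droot) && (w \in dbag (dparent t)).
Proof.
case: t => [a | s] /=.
  case/imsetP=> x; rewrite !inE andbT => x_a -> /= a_x.
  have /negPf x_ne : x.1 != a by apply: contraNneq a_x => ->.
  move: x_a; rewrite x_ne /= => /eqP x_pa.
  rewrite mem_node_bag x_pa eqxx andbT; apply: contraNneq a_x => -[a_root].
  by rewrite x_pa a_root Tparent_root.
case/setU1P=> [-> | /imsetP[x x_s ->] _]; first by rewrite eqxx.
by rewrite mem_node_bag edge_node_adj.
Qed.

Lemma primal_edge_in_dbag x y : primal (CNF e) x y ->
  exists t, (x \in dbag t) && (y \in dbag t).
Proof.
case/primal_CNF_edge=> p uv /andP[occ_x occ_y].
by exists (inr (edge_evar uv)); rewrite /= !edge_clause_sub_edge_bag.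
Qed.

End CliqueTreeDecomposition.

Theorem lemma1 (r k : nat) (hk : 2 <= k) :
  treewidth_le (primal (F_rk r k)) (2 * k - 1).
Proof.
exists (dnode r k), (parent_rel (@dparent r k) (droot r k)), (@dbag r k); split.
  apply: (parent_tree_decomposition (@drank_parent r k) (@dbag_parent r k)).
    exact: dbag_top.
  exact: primal_edge_in_dbag.
case=> [a | s].
  by apply: leq_trans (@card_node_bag r k a) _; lia.
by apply: leq_trans (card_edge_bag s) _; lia.
Qed.
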